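(* Call-by-value coupled logical bisimilarity coincides with the contextual equivalences: $(\approx^v_1,\approx^v_2)=(\simeq^v,\cong^v)$. In particular $(\simeq^v,\cong^v)$ is itself a call-by-value coupled logical bisimulation, and $\approx^v_1=\simeq^v=\cong^v=\approx^v_2$.
   Context: $\Lambda^\bullet$ is the set of closed $\lambda$-terms; values are closed abstractions. Call-by-value reduction on closed terms: $MN\longrightarrow MN'$ if $N\longrightarrow N'$; $MV\longrightarrow M'V$ if $M\longrightarrow M'$ and $V$ is a value; $(\lambda x.P)V\longrightarrow P[V/x]$ if $V$ is a value; $\Longrightarrow$ is the reflexive transitive closure; $M{\Downarrow}$ means $M\Longrightarrow V$ for some value $V$. Contexts are generated by $C::=x\mid[\cdot]\mid C\,C\mid\lambda x.C$, possibly with several holes numbered left to right; $C[\widetilde M]$ fills the $i$-th hole with $M_i$; $C[M]$ fills every hole with $M$. For $\mathcal{R}\subseteq\Lambda^\bullet\times\Lambda^\bullet$, $\mathcal{R}^\star=\{(C[\widetilde M],C[\widetilde N]) : C\text{ a context},\ M_i\,\mathcal{R}\,N_i\ \forall i,\ C[\widetilde M],C[\widetilde N]\in\Lambda^\bullet\}$. $M\simeq^v N$ iff for all contexts $C$ with $C[M],C[N]$ closed, $C[M]{\Downarrow}\iff C[N]{\Downarrow}$. Call-by-value evaluation contexts: $\mathcal{E}::=[\cdot]\mid M\,\mathcal{E}\mid\mathcal{E}\,V$ ($M\in\Lambda^\bullet$, $V$ a value); $M\cong^v N$ iff for all $\mathcal{E}$, $\mathcal{E}[M]{\Downarrow}\iff\mathcal{E}[N]{\Downarrow}$.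 A coupled relation is a pair $(\mathcal{R}_1,\mathcal{R}_2)$ of relations on $\Lambda^\bullet$ with $\mathcal{R}_1\subseteq\mathcal{R}_2$. It is a call-by-value coupled logical bisimulation if whenever $M\,\mathcal{R}_2\,N$: (1) if $M\longrightarrow M'$ then there is $N'$ with $N\Longrightarrow N'$ and $M'\,\mathcal{R}_2\,N'$; (2) if $M=\lambda x.M'$ then $N\Longrightarrow\lambda x.N'$ for some $N'$, $\lambda x.M'\,\mathcal{R}_1\,\lambda x.N'$, and for all values $P,Q$ with $P\,\mathcal{R}_1^\star\,Q$, $M'[P/x]\,\mathcal{R}_2\,N'[Q/x]$; (3) the converses of (1),(2) with $M$ and $N$ exchanged. $(\approx^v_1,\approx^v_2)$ is the componentwise union of all call-by-value coupled logical bisimulations. *)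

(* Pure lambda calculus with de Bruijn indices (terms up to alpha). *)
From Stdlib Require Import List Arith.
Import ListNotations.

Inductive term : Type :=
| Var : nat -> term
| Lam : term -> term
| App : term -> term -> term.

Fixpoint closedn (k : nat) (t : term) : Prop :=
  match t with
  | Var n => n < k
  | Lam b => closedn (S k) b
  | App a b => closedn k a /\ closedn k b
  end.

Definition closed (t : term) : Prop := closedn 0 t.

Definition is_value (t : term) : Prop := exists b, t = Lam b.

(* subst k V t : replace index k (the variable bound by the outermost
   removed binder, seen at depth k) by the CLOSED term V; no shifting of V
   is needed since V is closed; indices above k are decremented. *)
Fixpoint subst (k : nat) (V : term) (t : term) : term :=
  match t with
  | Var n => if Nat.eqb n k then V else if Nat.ltb n k then Var n else Var (pred n)
  | Lam b => Lam (subst (S k) V b)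
  | App a b => App (subst k V a) (subst k V b)
  end.

(* P[V/x] where t = \x.P *)
Definition inst (P V : term) : term := subst 0 V P.

(* call-by-value reduction (argument evaluated first) *)
Inductive step : term -> term -> Prop :=
| step_appR : forall M N N', step N N' -> step (App M N) (App M N')
| step_appL : forall M M' V, step M M' -> is_value V -> step (App M V) (App M' V)
| step_beta : forall P V, is_value V -> step (App (Lam P) V) (inst P V).

Inductive steps : term -> term -> Prop :=
| steps_refl : forall M, steps M M
| steps_trans : forall M M' M'', step M M' -> steps M' M'' -> steps M M''.

Definition converges (M : term) : Prop := exists V, steps M V /\ is_value V.

(* multi-hole contexts; holes numbered left to right *)
Inductive ctx : Type :=
| CVar : nat -> ctx
| CHole : ctx
| CApp : ctx -> ctx -> ctx
| CLam : ctx -> ctx.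

Fixpoint nholes (C : ctx) : nat :=
  match C with
  | CVar _ => 0
  | CHole => 1
  | CApp C1 C2 => nholes C1 + nholes C2
  | CLam C1 => nholes C1
  end.

(* C[~M]: fill the i-th hole with the i-th element of the list (filling
   is capturing, but only closed terms are ever plugged in below) *)
Fixpoint fill (C : ctx) (Ms : list term) : term :=
  match C with
  | CVar n => Var n
  | CHole => match Ms with M :: _ => M | [] => Var 0 end
  | CApp C1 C2 => App (fill C1 (firstn (nholes C1) Ms)) (fill C2 (skipn (nholes C1) Ms))
  | CLam C1 => Lam (fill C1 Ms)
  end.

Fixpoint fill1 (C : ctx) (M : term) : term :=
  match C with
  | CVar n => Var n
  | CHole => M
  | CApp C1 C2 => App (fill1 C1 M) (fill1 C2 M)
  | CLam C1 => Lam (fill1 C1 M)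
  end.

Definition rel := term -> term -> Prop.

Definition ctx_closure (R : rel) : rel := fun P Q =>
  exists (C : ctx) (Ms Ns : list term),
    length Ms = nholes C /\ Forall2 R Ms Ns /\
    closed (fill C Ms) /\ closed (fill C Ns) /\
    P = fill C Ms /\ Q = fill C Ns.

Definition ctx_equiv (M N : term) : Prop :=
  closed M /\ closed N /\
  forall C : ctx, closed (fill1 C M) -> closed (fill1 C N) ->
    (converges (fill1 C M) <-> converges (fill1 C N)).

Inductive ectx : Type :=
| EHole : ectx
| EArg : term -> ectx -> ectx
| EFun : ectx -> term -> ectx.

Fixpoint ectx_ok (E : ectx) : Prop :=
  match E with
  | EHole => True
  | EArg M E1 => closed M /\ ectx_ok E1
  | EFun E1 V => closed V /\ is_value V /\ ectx_ok E1
  end.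

Fixpoint efill (E : ectx) (M : term) : term :=
  match E with
  | EHole => M
  | EArg N E1 => App N (efill E1 M)
  | EFun E1 V => App (efill E1 M) V
  end.

Definition ev_equiv (M N : term) : Prop :=
  closed M /\ closed N /\
  forall E : ectx, ectx_ok E ->
    (converges (efill E M) <-> converges (efill E N)).

Definition cbv_coupled_bisim (R1 R2 : rel) : Prop :=
  (forall M N, R2 M N -> closed M /\ closed N) /\
  (forall M N, R1 M N -> R2 M N) /\
  (forall M N, R2 M N ->
     (forall M', step M M' -> exists N', steps N N' /\ R2 M' N') /\
     (* (2) *)
     (forall M', M = Lam M' -> exists N', steps N (Lam N') /\ R1 (Lam M') (Lam N') /\
        forall P Q, is_value P -> is_value Q -> ctx_closure R1 P Q ->
          R2 (inst M' P) (inst N' Q)) /\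
     (forall N', step N N' -> exists M', steps M M' /\ R2 M' N') /\
     (forall N', N = Lam N' -> exists M', steps M (Lam M') /\ R1 (Lam M') (Lam N') /\
        forall P Q, is_value P -> is_value Q -> ctx_closure R1 P Q ->
          R2 (inst M' P) (inst N' Q))).

Definition approx1 : rel := fun M N =>
  exists R1 R2, cbv_coupled_bisim R1 R2 /\ R1 M N.
Definition approx2 : rel := fun M N =>
  exists R1 R2, cbv_coupled_bisim R1 R2 /\ R2 M N.

From Stdlib Require Import List Arith Lia.
Import ListNotations.

(* Soundness: for a coupled bisimulation (R1, R2), relate two closed terms when
   they are R2-related, or built from R1-related terms by any term constructors
   ([compat R1]), or are applications of such pairs.  This relation is
   simulated by reduction of the right-hand side (beta-redexes of R1-related
   abstractions land back in R2 by clause (2), since substituting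
   [compat R1]-related values is exactly [R1^star]), so R2 is included in the
   evaluation-context equivalence [ev_equiv].

   Completeness: the compatible closure of [ev_equiv] is simulated by
   reduction up to [ev_equiv] (a CIU argument, which needs only that
   call-by-value reduction is deterministic), hence [ev_equiv] is included in
   contextual equivalence [ctx_equiv]; the converse holds because evaluation
   contexts are contexts.  Finally ([ctx_equiv], [ev_equiv]) is itself a
   coupled bisimulation: [ev_equiv] contains reduction, and
   (\x.A) P ~ (\x.B) P ~ (\x.B) Q gives clause (2). *)

Lemma closedn_weaken t : forall k k', closedn k t -> k <= k' -> closedn k' t.
Proof.
  induction t; simpl; intros k k' H Hle.
  - lia.
  - apply (IHt (S k)); [exact H | lia].
  - destruct H; split; eauto.
Qed.

Lemma closed_closedn t k : closed t -> closedn k t.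
Proof. intros H; apply closedn_weaken with 0; [exact H | lia]. Qed.

Lemma closed_App a b : closed (App a b) <-> closed a /\ closed b.
Proof. reflexivity. Qed.

Lemma subst_closedn t : forall k V, closedn k t -> subst k V t = t.
Proof.
  induction t; simpl; intros k V H.
  - destruct (Nat.eqb_spec n k); [lia |].
    destruct (Nat.ltb_spec n k); [reflexivity | lia].
  - f_equal; auto.
  - destruct H; f_equal; auto.
Qed.

Lemma closedn_subst t : forall m k V,
  closedn (S m) t -> k <= m -> closed V -> closedn m (subst k V t).
Proof.
  induction t; simpl; intros m k V H Hk HV.
  - destruct (Nat.eqb_spec n k); [apply closed_closedn; exact HV |].
    destruct (Nat.ltb_spec n k); simpl; lia.
  - apply IHt; auto; lia.
  - destruct H; split; eauto.
Qed.

Lemma step_closed M M' : step M M' -> closed M -> closed M'.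
Proof.
  unfold closed; induction 1; simpl; intros [HM HN].
  - split; auto.
  - split; auto.
  - apply closedn_subst; auto.
Qed.

Lemma steps_closed M M' : steps M M' -> closed M -> closed M'.
Proof. induction 1; eauto using step_closed. Qed.

Lemma value_irreducible V X : is_value V -> ~ step V X.
Proof. intros [b ->] H; inversion H. Qed.

Lemma step_deterministic M X : step M X -> forall Y, step M Y -> X = Y.
Proof.
  induction 1; intros Y HY; inversion HY; subst;
    try reflexivity;
    try (f_equal; auto; fail);
    exfalso; match goal with
             | H : step ?V _ |- _ =>
                 apply (value_irreducible V _ ltac:(solve [assumption | eexists; reflexivity]) H)
             end.
Qed.

Lemma steps_value V X : is_value V -> steps V X -> X = V.
Proof.
  intros HV H; inversion H; subst; [reflexivity |].
  exfalso; eapply value_irreducible; eauto.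
Qed.

Lemma steps_concat M N P : steps M N -> steps N P -> steps M P.
Proof. induction 1; eauto using steps_trans. Qed.

Lemma steps_App_r M N N' : steps N N' -> steps (App M N) (App M N').
Proof. induction 1; eauto using steps, step. Qed.

Lemma steps_App_l M M' V : is_value V -> steps M M' -> steps (App M V) (App M' V).
Proof. induction 2; eauto using steps, step. Qed.

Lemma steps_App M M' N V :
  steps N V -> is_value V -> steps M M' -> steps (App M N) (App M' V).
Proof. eauto using steps_concat, steps_App_r, steps_App_l. Qed.

Lemma value_converges V : is_value V -> converges V.
Proof. exists V; split; [constructor | assumption]. Qed.

Lemma converges_steps M N : steps M N -> converges N -> converges M.
Proof. intros H [V [HV Hval]]; exists V; eauto using steps_concat. Qed.

Lemma converges_step M M' : step M M' -> converges M -> converges M'.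
Proof.
  intros HS [V [H Hval]]; inversion H; subst.
  - exfalso; eapply value_irreducible; eauto.
  - exists V; split; [| assumption].
    rewrite (step_deterministic _ _ HS _ H0); assumption.
Qed.

Fixpoint ecomp (E F : ectx) : ectx :=
  match E with
  | EHole => F
  | EArg N E1 => EArg N (ecomp E1 F)
  | EFun E1 V => EFun (ecomp E1 F) V
  end.

Lemma efill_ecomp E F X : efill (ecomp E F) X = efill E (efill F X).
Proof. induction E; simpl; congruence. Qed.

Lemma ectx_ok_ecomp E F : ectx_ok E -> ectx_ok F -> ectx_ok (ecomp E F).
Proof. induction E; simpl; tauto. Qed.

Lemma efill_step E M M' : ectx_ok E -> step M M' -> step (efill E M) (efill E M').
Proof. induction E; simpl; intros HE HS; try constructor; tauto. Qed.

Lemma efill_closed E M : ectx_ok E -> closed M -> closed (efill E M).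
Proof. unfold closed; induction E; simpl; tauto. Qed.

Lemma ev_equiv_closed M N : ev_equiv M N -> closed M /\ closed N.
Proof. intros [HM [HN _]]; auto. Qed.

Lemma ev_equiv_refl M : closed M -> ev_equiv M M.
Proof. repeat split; auto. Qed.

Lemma ev_equiv_sym M N : ev_equiv M N -> ev_equiv N M.
Proof. intros [HM [HN H]]; repeat split; auto; apply H; auto. Qed.

Lemma ev_equiv_trans M N P : ev_equiv M N -> ev_equiv N P -> ev_equiv M P.
Proof.
  intros [HM [HN H]] [_ [HP H']]; repeat split; auto; intros.
  - apply H', H; auto.
  - apply H, H'; auto.
Qed.

Lemma ev_equiv_converges M N : ev_equiv M N -> converges M -> converges N.
Proof. intros [_ [_ H]]; apply (H EHole); exact I. Qed.

Lemma ev_equiv_step M M' : closed M -> step M M' -> ev_equiv M M'.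
Proof.
  intros HM HS; split; [exact HM | split; [eapply step_closed; eauto |]].
  intros E HE; split.
  - apply converges_step, efill_step; assumption.
  - apply converges_steps; econstructor; [apply efill_step; eauto | constructor].
Qed.

Lemma ev_equiv_steps M M' : closed M -> steps M M' -> ev_equiv M M'.
Proof.
  intros HM H; induction H; [apply ev_equiv_refl; assumption |].
  apply ev_equiv_trans with M'; [apply ev_equiv_step; assumption |].
  apply IHsteps; eapply step_closed; eauto.
Qed.

Lemma ev_equiv_efill E M N : ectx_ok E -> ev_equiv M N -> ev_equiv (efill E M) (efill E N).
Proof.
  intros HE [HM [HN H]]; split; [| split]; try (apply efill_closed; assumption).
  intros F HF; rewrite <- !efill_ecomp; apply H, ectx_ok_ecomp; assumption.
Qed.

Lemma ev_equiv_App_r A M N : closed A -> ev_equiv M N -> ev_equiv (App A M) (App A N).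
Proof. intros HA; apply (ev_equiv_efill (EArg A EHole)); simpl; auto. Qed.

Lemma ev_equiv_App_l V M N :
  closed V -> is_value V -> ev_equiv M N -> ev_equiv (App M V) (App N V).
Proof. intros HV HV'; apply (ev_equiv_efill (EFun EHole V)); simpl; auto. Qed.

Lemma Forall2_firstn {A B} (R : A -> B -> Prop) n l l' :
  Forall2 R l l' -> Forall2 R (firstn n l) (firstn n l').
Proof. intros H; revert n; induction H; intros [|m]; simpl; auto. Qed.

Lemma Forall2_skipn {A B} (R : A -> B -> Prop) n l l' :
  Forall2 R l l' -> Forall2 R (skipn n l) (skipn n l').
Proof. intros H; revert n; induction H; intros [|m]; simpl; auto. Qed.

Inductive compat (R : rel) : rel :=
| compat_base : forall A B, R A B -> compat R A B
| compat_var : forall n, compat R (Var n) (Var n)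
| compat_lam : forall a b, compat R a b -> compat R (Lam a) (Lam b)
| compat_app : forall a a' b b', compat R a a' -> compat R b b' -> compat R (App a b) (App a' b').

Section Compat.
Variable R : rel.

Lemma compat_refl t : compat R t t.
Proof. induction t; eauto using compat. Qed.

Lemma compat_mono (S : rel) X Y : (forall a b, R a b -> S a b) -> compat R X Y -> compat S X Y.
Proof. intros HRS; induction 1; eauto using compat. Qed.

Lemma compat_sym X Y : (forall a b, R a b -> R b a) -> compat R X Y -> compat R Y X.
Proof. intros HR; induction 1; eauto using compat. Qed.

Lemma compat_fill1 C M N : R M N -> compat R (fill1 C M) (fill1 C N).
Proof. intros H; induction C; simpl; eauto using compat. Qed.

Lemma compat_efill E M N : compat R M N -> compat R (efill E M) (efill E N).
Proof. intros H; induction E; simpl; auto using compat, compat_refl. Qed.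

(* The holes of [compat R] contain closed terms, which substitution leaves intact. *)
Lemma compat_subst (HR : forall A B, R A B -> closed A /\ closed B) P P' :
  compat R P P' -> forall k V V', compat R V V' -> compat R (subst k V P) (subst k V' P').
Proof.
  induction 1; intros k V V' HV; simpl.
  - destruct (HR _ _ H).
    rewrite !subst_closedn by (apply closed_closedn; assumption).
    apply compat_base; assumption.
  - destruct (Nat.eqb n k); [assumption |].
    destruct (Nat.ltb n k); apply compat_var.
  - apply compat_lam; auto.
  - apply compat_app; auto.
Qed.

Lemma fill_compat C : forall Ms Ns,
  length Ms = nholes C -> Forall2 R Ms Ns -> compat R (fill C Ms) (fill C Ns).
Proof.
  induction C; simpl; intros Ms Ns HL HF.
  - apply compat_var.
  - inversion HF; subst; simpl in HL; [lia |]. apply compat_base; assumption.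
  - apply compat_app.
    + apply IHC1; [rewrite length_firstn; lia | apply Forall2_firstn; assumption].
    + apply IHC2; [rewrite length_skipn; lia | apply Forall2_skipn; assumption].
  - apply compat_lam; auto.
Qed.

Lemma compat_fill P Q : compat R P Q ->
  exists C Ms Ns, length Ms = nholes C /\ Forall2 R Ms Ns /\ P = fill C Ms /\ Q = fill C Ns.
Proof.
  induction 1.
  - exists CHole, [A], [B]; simpl; auto.
  - exists (CVar n), [], []; simpl; auto.
  - destruct IHcompat as [C [Ms [Ns [HL [HF [-> ->]]]]]].
    exists (CLam C), Ms, Ns; simpl; auto.
  - destruct IHcompat1 as [C [Ms [Ns [HL [HF [-> ->]]]]]].
    destruct IHcompat2 as [C' [Ms' [Ns' [HL' [HF' [-> ->]]]]]].
    assert (HN : length Ns = nholes C) by (rewrite <- (Forall2_length HF); assumption).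
    exists (CApp C C'), (Ms ++ Ms'), (Ns ++ Ns'); simpl.
    rewrite <- HL at 2 3; rewrite <- HN at 2 3.
    rewrite !firstn_app, !skipn_app, !Nat.sub_diag, !firstn_all, !skipn_all, !app_nil_r; simpl.
    rewrite length_app, HL, HL'.
    repeat split; auto using Forall2_app.
Qed.

Lemma ctx_closure_compat P Q : ctx_closure R P Q -> compat R P Q.
Proof. intros [C [Ms [Ns [HL [HF [_ [_ [-> ->]]]]]]]]; apply fill_compat; assumption. Qed.

Lemma compat_ctx_closure P Q : compat R P Q -> closed P -> closed Q -> ctx_closure R P Q.
Proof.
  intros H HP HQ; destruct (compat_fill _ _ H) as [C [Ms [Ns [HL [HF [-> ->]]]]]].
  exists C, Ms, Ns; repeat split; assumption.
Qed.

End Compat.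

(** * CIU: [ev_equiv] is a congruence *)

Lemma compat_ev_value V Y : compat ev_equiv V Y -> is_value V -> closed Y ->
  exists Y', steps Y Y' /\ is_value Y' /\ compat ev_equiv V Y'.
Proof.
  intros H HV HY; inversion H as [? ? Hev | | a b Hab |]; subst.
  - destruct (ev_equiv_converges _ _ Hev (value_converges _ HV)) as [Y' [Hs HY']].
    exists Y'; repeat split; [assumption | assumption |].
    apply compat_base, ev_equiv_trans with Y; [assumption | apply ev_equiv_steps; assumption].
  - destruct HV; discriminate.
  - exists (Lam b); repeat split; [constructor | eexists; reflexivity | assumption].
  - destruct HV; discriminate.
Qed.

Lemma ev_equiv_step_compat M M' Y : step M M' -> ev_equiv M Y ->
  exists Y', ev_equiv Y Y' /\ compat ev_equiv M' Y'.
Proof.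
  intros HS H; exists Y; split; [apply ev_equiv_refl, (ev_equiv_closed _ _ H) |].
  apply compat_base, ev_equiv_trans with M; [| assumption].
  apply ev_equiv_sym, ev_equiv_step; [apply (ev_equiv_closed _ _ H) | assumption].
Qed.

Lemma compat_ev_step M M' : step M M' -> forall Y, closed M -> closed Y ->
  compat ev_equiv M Y -> exists Y', ev_equiv Y Y' /\ compat ev_equiv M' Y'.
Proof.
  induction 1 as [M N N' HS IH | M M' V HS IH HV | P V HV]; intros Y HM HY HU;
    inversion HU as [? ? Hev | | | a a' b b' Ha Hb]; subst;
    try (eapply ev_equiv_step_compat; [econstructor; eassumption | eassumption]);
    apply closed_App in HM as [HM1 HM2]; apply closed_App in HY as [HY1 HY2].
  - destruct (IH _ HM2 HY2 Hb) as [b'' [Hev Hb']].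
    exists (App a' b''); split; [apply ev_equiv_App_r | apply compat_app]; assumption.
  - destruct (compat_ev_value _ _ Hb HV HY2) as [v [Hs [Hv Hbv]]].
    destruct (IH _ HM1 HY1 Ha) as [a'' [Hev Ha']].
    pose proof (steps_closed _ _ Hs HY2) as Hcv.
    exists (App a'' v); split; [| apply compat_app; assumption].
    apply ev_equiv_trans with (App a' v).
    + apply ev_equiv_App_r, ev_equiv_steps; assumption.
    + apply ev_equiv_App_l; assumption.
  - destruct (compat_ev_value _ _ Hb HV HY2) as [v [Hs [Hv Hbv]]].
    pose proof (steps_closed _ _ Hs HY2) as Hcv.
    assert (Hev : ev_equiv (App a' b') (App a' v))
      by (apply ev_equiv_App_r, ev_equiv_steps; assumption).
    inversion Ha as [? ? Hfun | | p p' Hp |]; subst.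
    + exists (inst P v); split.
      * apply ev_equiv_trans with (App a' v); [assumption |].
        apply ev_equiv_trans with (App (Lam P) v).
        -- apply ev_equiv_App_l, ev_equiv_sym; assumption.
        -- apply ev_equiv_step; [apply closed_App; split |]; auto using step.
      * apply compat_subst; [exact ev_equiv_closed | apply compat_refl | assumption].
    + exists (inst p' v); split.
      * apply ev_equiv_trans with (App (Lam p') v); [assumption |].
        apply ev_equiv_step; [apply closed_App; split |]; auto using step.
      * apply compat_subst; [exact ev_equiv_closed | assumption | assumption].
Qed.

Lemma compat_ev_converges M Y : closed M -> closed Y ->
  compat ev_equiv M Y -> converges M -> converges Y.
Proof.
  intros HM HY HU [V [Hs HV]]; revert Y HM HY HU; induction Hs; intros Y HM HY HU.
  - destruct (compat_ev_value _ _ HU HV HY) as [Y' [Hs [HY' _]]].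
    exists Y'; split; assumption.
  - destruct (compat_ev_step _ _ H _ HM HY HU) as [Y' [Hev HU']].
    apply (ev_equiv_converges _ _ (ev_equiv_sym _ _ Hev)).
    apply IHHs; [assumption | eapply step_closed; eassumption | apply (ev_equiv_closed _ _ Hev) | assumption].
Qed.

Lemma compat_ev_equiv P Q : closed P -> closed Q -> compat ev_equiv P Q -> ev_equiv P Q.
Proof.
  intros HP HQ HU; split; [assumption | split; [assumption |]].
  intros E HE; split; apply compat_ev_converges; auto using efill_closed, compat_efill.
  apply compat_efill, compat_sym; [exact ev_equiv_sym | assumption].
Qed.

Lemma ev_equiv_ctx_equiv M N : ev_equiv M N -> ctx_equiv M N.
Proof.
  intros H; destruct (ev_equiv_closed _ _ H) as [HM HN].
  split; [assumption | split; [assumption |]].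
  intros C HCM HCN; split; apply compat_ev_converges; auto using compat_fill1, ev_equiv_sym.
Qed.

Fixpoint ctx_of_term (t : term) : ctx :=
  match t with
  | Var n => CVar n
  | Lam b => CLam (ctx_of_term b)
  | App a b => CApp (ctx_of_term a) (ctx_of_term b)
  end.

Lemma fill1_ctx_of_term t M : fill1 (ctx_of_term t) M = t.
Proof. induction t; simpl; congruence. Qed.

Fixpoint ctx_of_ectx (E : ectx) : ctx :=
  match E with
  | EHole => CHole
  | EArg N E1 => CApp (ctx_of_term N) (ctx_of_ectx E1)
  | EFun E1 V => CApp (ctx_of_ectx E1) (ctx_of_term V)
  end.

Lemma fill1_ctx_of_ectx E M : fill1 (ctx_of_ectx E) M = efill E M.
Proof. induction E; simpl; rewrite ?fill1_ctx_of_term; congruence. Qed.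

Lemma ctx_equiv_ev_equiv M N : ctx_equiv M N -> ev_equiv M N.
Proof.
  intros [HM [HN H]]; split; [assumption | split; [assumption |]].
  intros E HE; rewrite <- !fill1_ctx_of_ectx.
  apply H; rewrite fill1_ctx_of_ectx; apply efill_closed; assumption.
Qed.

(** * Soundness of coupled logical bisimulations *)

Section Soundness.
Variables R1 R2 : rel.
Hypothesis bisim : cbv_coupled_bisim R1 R2.

Lemma bisim_closed M N : R2 M N -> closed M /\ closed N.
Proof. apply bisim. Qed.

Lemma bisim_incl M N : R1 M N -> R2 M N.
Proof. apply bisim. Qed.

Lemma bisim_step M N M' : R2 M N -> step M M' -> exists N', steps N N' /\ R2 M' N'.
Proof. intros H; apply (proj2 (proj2 bisim) M N H). Qed.

Lemma bisim_lam M N : R2 (Lam M) N -> exists N', steps N (Lam N') /\ R1 (Lam M) (Lam N') /\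
  forall P Q, is_value P -> is_value Q -> ctx_closure R1 P Q -> R2 (inst M P) (inst N' Q).
Proof. intros H; apply (proj2 (proj2 bisim) _ N H); reflexivity. Qed.

Inductive app_closure : rel :=
| ac_bisim : forall A B, R2 A B -> app_closure A B
| ac_compat : forall A B, compat R1 A B -> app_closure A B
| ac_app : forall a a' b b', app_closure a a' -> app_closure b b' -> app_closure (App a b) (App a' b').

Lemma app_closure_efill E M N : app_closure M N -> app_closure (efill E M) (efill E N).
Proof. intros H; induction E; simpl; auto using app_closure, compat_refl. Qed.

Lemma app_closure_App_inv a b Y : app_closure (App a b) Y ->
  R2 (App a b) Y \/ exists a' b', Y = App a' b' /\ app_closure a a' /\ app_closure b b'.
Proof.
  intros H; inversion H as [? ? HR | ? ? HU | ? a' ? b' Ha Hb]; subst;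
    [left; assumption | | right; exists a', b'; auto].
  inversion HU as [? ? HR | | | ? a' ? b' Ha Hb]; subst.
  - left; apply bisim_incl; assumption.
  - right; exists a', b'; auto using app_closure.
Qed.

Lemma app_closure_lam b Y : app_closure (Lam b) Y ->
  exists F, steps Y (Lam F) /\ compat R1 (Lam b) (Lam F).
Proof.
  assert (Hbisim : R2 (Lam b) Y -> exists F, steps Y (Lam F) /\ compat R1 (Lam b) (Lam F)).
  { intros H; destruct (bisim_lam _ _ H) as [F [Hs [HR _]]].
    exists F; split; [assumption | apply compat_base; assumption]. }
  intros H; inversion H as [? ? HR | ? ? HU |]; subst; auto.
  inversion HU as [? ? HR | | ? F HbF |]; subst; auto using bisim_incl.
  exists F; split; [constructor | assumption].
Qed.

(* A compatible pair of abstractions is either R1-related at the root, and clause (2)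
   applies, or related under the binder, and the substitution lemma applies. *)
Lemma app_closure_beta P F V W : compat R1 (Lam P) (Lam F) -> compat R1 V W ->
  is_value V -> is_value W -> closed V -> closed W -> app_closure (inst P V) (inst F W).
Proof.
  intros HPF HVW HV HW HcV HcW; inversion HPF as [? ? HR | | ? ? HU |]; subst.
  - destruct (bisim_lam _ _ (bisim_incl _ _ HR)) as [F' [Hs [_ Hinst]]].
    apply steps_value in Hs; [injection Hs as -> | eexists; reflexivity].
    apply ac_bisim, Hinst; [assumption | assumption |].
    apply compat_ctx_closure; assumption.
  - apply ac_compat, compat_subst; [| assumption | assumption].
    intros A B HAB; apply bisim_closed, bisim_incl, HAB.
Qed.

Lemma app_closure_step M M' : step M M' -> forall Y, closed M -> closed Y ->
  app_closure M Y -> exists Y', steps Y Y' /\ app_closure M' Y'.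
Proof.
  induction 1 as [M N N' HS IH | M M' V HS IH HV | P V HV]; intros Y HM HY HT;
    (destruct (app_closure_App_inv _ _ _ HT) as [HR | [a' [b' [-> [Ha Hb]]]]];
     [edestruct bisim_step as [Y' [Hs HR']]; [eassumption | econstructor; eassumption |];
      exists Y'; split; [assumption | apply ac_bisim; assumption] |]);
    apply closed_App in HM as [HM1 HM2]; apply closed_App in HY as [HY1 HY2].
  - destruct (IH _ HM2 HY2 Hb) as [b'' [Hs Hb']].
    exists (App a' b''); split; [apply steps_App_r | apply ac_app]; assumption.
  - destruct HV as [v ->]; destruct (app_closure_lam _ _ Hb) as [G [HsG HvG]].
    destruct (IH _ HM1 HY1 Ha) as [a'' [Hs Ha']].
    exists (App a'' (Lam G)); split.
    + apply steps_App; [assumption | eexists; reflexivity | assumption].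
    + apply ac_app, ac_compat; assumption.
  - destruct HV as [v ->]; destruct (app_closure_lam _ _ Hb) as [G [HsG HvG]].
    destruct (app_closure_lam _ _ Ha) as [F [HsF HPF]].
    exists (inst F (Lam G)); split.
    + apply steps_concat with (App (Lam F) (Lam G)).
      * apply steps_App; [assumption | eexists; reflexivity | assumption].
      * econstructor; [apply step_beta; eexists; reflexivity | constructor].
    + apply app_closure_beta; try (eexists; reflexivity); try assumption.
      eapply steps_closed; eassumption.
Qed.

Lemma app_closure_converges M Y : closed M -> closed Y ->
  app_closure M Y -> converges M -> converges Y.
Proof.
  intros HM HY HT [V [Hs HV]]; revert Y HM HY HT; induction Hs; intros Y HM HY HT.
  - destruct HV as [b ->]; destruct (app_closure_lam _ _ HT) as [F [Hs _]].
    exists (Lam F); split; [assumption | eexists; reflexivity].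
  - destruct (app_closure_step _ _ H _ HM HY HT) as [Y' [Hs' HT']].
    apply converges_steps with Y'; [assumption |].
    apply IHHs; [assumption | eapply step_closed | eapply steps_closed |]; eassumption.
Qed.

Lemma bisim_converges M N E : R2 M N -> ectx_ok E ->
  converges (efill E M) -> converges (efill E N).
Proof.
  intros H HE; destruct (bisim_closed _ _ H).
  apply app_closure_converges; auto using efill_closed, app_closure_efill, app_closure.
Qed.

End Soundness.

Definition converse (R : rel) : rel := fun a b => R b a.

Lemma ctx_closure_converse R P Q : ctx_closure (converse R) P Q -> ctx_closure R Q P.
Proof.
  intros [C [Ms [Ns [HL [HF [HP [HQ [-> ->]]]]]]]].
  exists C, Ns, Ms; rewrite <- (Forall2_length HF); repeat split; try assumption.
  apply Forall2_flip; assumption.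
Qed.

Lemma bisim_converse R1 R2 :
  cbv_coupled_bisim R1 R2 -> cbv_coupled_bisim (converse R1) (converse R2).
Proof.
  intros [Hc [Hs Hb]]; split; [| split].
  - intros M N H; destruct (Hc _ _ H); auto.
  - intros M N H; apply Hs; assumption.
  - intros M N H; destruct (Hb _ _ H) as [H1 [H2 [H3 H4]]].
    split; [| split; [| split]]; [exact H3 | | exact H1 |].
    + intros M' ->; destruct (H4 _ eq_refl) as [N' [? [? Hi]]].
      exists N'; repeat split; try assumption.
      intros P Q HP HQ HPQ; apply Hi, ctx_closure_converse; assumption.
    + intros N' ->; destruct (H2 _ eq_refl) as [M' [? [? Hi]]].
      exists M'; repeat split; try assumption.
      intros P Q HP HQ HPQ; apply Hi, ctx_closure_converse; assumption.
Qed.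

Lemma bisim_sound R1 R2 M N : cbv_coupled_bisim R1 R2 -> R2 M N -> ev_equiv M N.
Proof.
  intros B H; destruct (bisim_closed _ _ B _ _ H) as [HM HN].
  split; [assumption | split; [assumption |]]; intros E HE; split.
  - apply (bisim_converges _ _ B); assumption.
  - apply (bisim_converges _ _ (bisim_converse _ _ B)); assumption.
Qed.

Lemma ev_equiv_lam M N : ev_equiv (Lam M) N ->
  exists N', steps N (Lam N') /\ ev_equiv (Lam M) (Lam N').
Proof.
  intros H; destruct (ev_equiv_converges _ _ H) as [V [Hs [N' ->]]];
    [apply value_converges; eexists; reflexivity |].
  exists N'; split; [assumption |].
  apply ev_equiv_trans with N; [assumption | apply ev_equiv_steps; [apply H | assumption]].
Qed.

Lemma ev_equiv_inst A B P Q : ev_equiv (Lam A) (Lam B) -> is_value P -> is_value Q ->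
  ev_equiv P Q -> ev_equiv (inst A P) (inst B Q).
Proof.
  intros HAB HP HQ HPQ; destruct (ev_equiv_closed _ _ HAB) as [HA HB].
  destruct (ev_equiv_closed _ _ HPQ) as [HcP HcQ].
  apply ev_equiv_trans with (App (Lam A) P).
  { apply ev_equiv_sym, ev_equiv_step; [apply closed_App; split |]; auto using step. }
  apply ev_equiv_trans with (App (Lam B) P); [apply ev_equiv_App_l; assumption |].
  apply ev_equiv_trans with (App (Lam B) Q); [apply ev_equiv_App_r; assumption |].
  apply ev_equiv_step; [apply closed_App; split |]; auto using step.
Qed.

Lemma ctx_closure_ctx_equiv P Q : ctx_closure ctx_equiv P Q -> ev_equiv P Q.
Proof.
  intros H; pose proof H as [C [Ms [Ns [_ [_ [HP [HQ [-> ->]]]]]]]].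
  apply compat_ev_equiv; [assumption | assumption |].
  apply (compat_mono ctx_equiv); [exact ctx_equiv_ev_equiv | apply ctx_closure_compat; exact H].
Qed.

Lemma ctx_ev_bisim : cbv_coupled_bisim ctx_equiv ev_equiv.
Proof.
  split; [exact ev_equiv_closed | split; [exact ctx_equiv_ev_equiv |]].
  intros M N H; destruct (ev_equiv_closed _ _ H) as [HM HN].
  split; [| split; [| split]].
  - intros M' HS; exists N; split; [constructor |].
    apply ev_equiv_trans with M; [apply ev_equiv_sym, ev_equiv_step |]; assumption.
  - intros M' ->; destruct (ev_equiv_lam _ _ H) as [N' [Hs HL]].
    exists N'; split; [assumption | split; [apply ev_equiv_ctx_equiv; assumption |]].
    intros P Q HP HQ HPQ; apply ev_equiv_inst; auto using ctx_closure_ctx_equiv.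
  - intros N' HS; exists M; split; [constructor |].
    apply ev_equiv_trans with N; [assumption | apply ev_equiv_step; assumption].
  - intros N' ->; destruct (ev_equiv_lam _ _ (ev_equiv_sym _ _ H)) as [M' [Hs HL]].
    apply ev_equiv_sym in HL.
    exists M'; split; [assumption | split; [apply ev_equiv_ctx_equiv; assumption |]].
    intros P Q HP HQ HPQ; apply ev_equiv_inst; auto using ctx_closure_ctx_equiv.
Qed.

Theorem mainTheorem17 :
  (forall M N, approx1 M N <-> ctx_equiv M N) /\
  (forall M N, approx2 M N <-> ev_equiv M N) /\
  cbv_coupled_bisim ctx_equiv ev_equiv /\
  (forall M N, (approx1 M N <-> ctx_equiv M N) /\ (ctx_equiv M N <-> ev_equiv M N)
               /\ (ev_equiv M N <-> approx2 M N)).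
Proof.
  assert (Happrox2 : forall M N, approx2 M N <-> ev_equiv M N).
  { intros M N; split.
    - intros [R1 [R2 [B H]]]; apply (bisim_sound R1 R2); assumption.
    - intros H; exists ctx_equiv, ev_equiv; split; [exact ctx_ev_bisim | exact H]. }
  assert (Happrox1 : forall M N, approx1 M N <-> ctx_equiv M N).
  { intros M N; split.
    - intros [R1 [R2 [B H]]].
      apply ev_equiv_ctx_equiv, (bisim_sound R1 R2); [assumption | apply B; assumption].
    - intros H; exists ctx_equiv, ev_equiv; split; [exact ctx_ev_bisim | exact H]. }
  split; [exact Happrox1 | split; [exact Happrox2 | split; [exact ctx_ev_bisim |]]].
  intros M N; split; [apply Happrox1 | split; [| apply iff_sym, Happrox2]].
  split; [apply ctx_equiv_ev_equiv | apply ev_equiv_ctx_equiv].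
Qed.
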